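(* Let $(M,\diamond,\bullet,\alpha_M)$ be a module over the multiplicative Hom-post-Lie algebra $(L,[\cdot,\cdot],\cdot,\alpha)$. Let $\beta_M:M\to M$ be a linear map such that $\alpha_M\circ\beta_M=\beta_M\circ\alpha_M$, $\beta_M(x\diamond m)=\alpha(x)\diamond\beta_M(m)$ and $\beta_M(x\bullet m)=\alpha(x)\bullet\beta_M(m)$ for all $x\in L,m\in M$. Define $x\,\tilde\diamond\, m=\beta_M(\alpha(x)\diamond m)$ and $x\,\tilde\bullet\, m=\beta_M(\alpha(x)\bullet m)$. Then $(M,\tilde\diamond,\tilde\bullet,\alpha_M\circ\beta_M)$ is a module over $(L,\alpha\circ[\cdot,\cdot],\alpha\circ\cdot,\alpha^2)$.
   Context: All vector spaces are over a field $\mathbb{K}$ of characteristic $\neq 2$. A Hom-Lie algebra is $(L,[\cdot,\cdot],\alpha)$ with $[\cdot,\cdot]$ bilinear skew-symmetric, $\alpha$ linear, and $[\alpha(x),[y,z]]+[\alpha(y),[z,x]]+[\alpha(z),[x,y]]=0$. A Hom-post-Lie algebra $(L,[\cdot,\cdot],\cdot,\alpha)$ is a Hom-Lie algebra with bilinear $\cdot$ such that $\alpha(z)\cdot[x,y]-[z\cdot x,\alpha(y)]-[\alpha(x),z\cdot y]=0$ and $\alpha(z)\cdot(y\cdot x)-\alpha(y)\cdot(z\cdot x)+(y\cdot z)\cdot\alpha(x)-(z\cdot y)\cdot\alpha(x)+[y,z]\cdot\alpha(x)=0$ for all $x,y,z$; it is multiplicative if $\alpha([x,y])=[\alpha(x),\alpha(y)]$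 and $\alpha(x\cdot y)=\alpha(x)\cdot\alpha(y)$. A module over a Hom-post-Lie algebra $(L,[\cdot,\cdot],\cdot,\alpha)$ is a vector space $M$ with linear $\alpha_M$ and bilinear $\diamond,\bullet:L\otimes M\to M$ such that for all $x,y\in L,m\in M$: (i) $\alpha_M(x\diamond m)=\alpha(x)\diamond\alpha_M(m)$, $\alpha_M(x\bullet m)=\alpha(x)\bullet\alpha_M(m)$; (ii) $[x,y]\diamond\alpha_M(m)=\alpha(x)\diamond(y\diamond m)-\alpha(y)\diamond(x\diamond m)$; (iii) $(x\cdot y)\diamond\alpha_M(m)=\alpha(x)\bullet(y\diamond m)-\alpha(y)\diamond(x\bullet m)$; (iv) $[x,y]\bullet\alpha_M(m)=\alpha(x)\bullet(y\bullet m)-\alpha(y)\bullet(x\bullet m)-(x\cdot y)\bullet\alpha_M(m)+(y\cdot x)\bullet\alpha_M(m)$. *)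

From mathcomp Require Import all_boot all_order all_algebra.
Set Implicit Arguments. Unset Strict Implicit. Unset Printing Implicit Defensive.
Import GRing.Theory.
Local Open Scope ring_scope.

Definition bilinear_op (K : fieldType) (U V W : lmodType K) (f : U -> V -> W) : Prop :=
  (forall (a : K) (x x' : U) (y : V), f (a *: x + x') y = a *: f x y + f x' y) /\
  (forall (a : K) (x : U) (y y' : V), f x (a *: y + y') = a *: f x y + f x y').

Definition skew_symmetric (K : fieldType) (L : lmodType K) (br : L -> L -> L) : Prop :=
  forall x y, br x y = - br y x.

Definition is_HomLie (K : fieldType) (L : lmodType K)
  (br : L -> L -> L) (al : {linear L -> L}) : Prop :=
  [/\ bilinear_op br, skew_symmetric br &
      forall x y z, br (al x) (br y z) + br (al y) (br z x) + br (al z) (br x y) = 0].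

Definition is_HomPostLie (K : fieldType) (L : lmodType K)
  (br dot : L -> L -> L) (al : {linear L -> L}) : Prop :=
  [/\ is_HomLie br al, bilinear_op dot,
      (forall x y z, dot (al z) (br x y) - br (dot z x) (al y) - br (al x) (dot z y) = 0) &
      (forall x y z, dot (al z) (dot y x) - dot (al y) (dot z x)
                     + dot (dot y z) (al x) - dot (dot z y) (al x)
                     + dot (br y z) (al x) = 0)].

Definition is_multiplicative (K : fieldType) (L : lmodType K)
  (br dot : L -> L -> L) (al : {linear L -> L}) : Prop :=
  (forall x y, al (br x y) = br (al x) (al y)) /\
  (forall x y, al (dot x y) = dot (al x) (al y)).

Record is_HomPostLie_module (K : fieldType) (L M : lmodType K)
  (br dot : L -> L -> L) (al : {linear L -> L})
  (dia bul : L -> M -> M) (alM : {linear M -> M}) : Prop := {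
  mod_dia_bilinear : bilinear_op dia;
  mod_bul_bilinear : bilinear_op bul;
  mod_i_dia : forall x m, alM (dia x m) = dia (al x) (alM m);
  mod_i_bul : forall x m, alM (bul x m) = bul (al x) (alM m);
  mod_ii : forall x y m,
    dia (br x y) (alM m) = dia (al x) (dia y m) - dia (al y) (dia x m);
  mod_iii : forall x y m,
    dia (dot x y) (alM m) = bul (al x) (dia y m) - dia (al y) (bul x m);
  mod_iv : forall x y m,
    bul (br x y) (alM m) =
      bul (al x) (bul y m) - bul (al y) (bul x m)
      - bul (dot x y) (alM m) + bul (dot y x) (alM m) }.

(* Yau's twisting principle: since [beta_M] intertwines [alpha] with the actions and commutes
   with [alpha_M], every twisted identity is [beta_M (beta_M _)] applied to the original
   module identity at [alpha x, alpha y], once multiplicativity rewrites [alpha^2] of a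
   product as [alpha] of the product of [alpha x] and [alpha y]. *)

From mathcomp Require Import all_boot all_order all_algebra.
Import GRing.Theory.
Local Open Scope ring_scope.

Section YauTwist.

Variables (K : fieldType) (L M : lmodType K).
Variables (al : {linear L -> L}) (alM betaM : {linear M -> M}).

Definition yau_twist (f : L -> M -> M) : L -> M -> M := fun x m => betaM (f (al x) m).

Lemma bilinear_yau_twist f : bilinear_op f -> bilinear_op (yau_twist f).
Proof.
move=> [fl fr]; split=> a x x' y; rewrite /yau_twist.
  by rewrite linearP fl linearP.
by rewrite fr linearP.
Qed.

Hypothesis alM_betaM : forall m, alM (betaM m) = betaM (alM m).

Section Equivariant.

Variable f : L -> M -> M.
Hypothesis betaM_f : forall x m, betaM (f x m) = f (al x) (betaM m).

Lemma yau_twist_alM_betaM v m :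
  yau_twist f v (alM (betaM m)) = betaM (betaM (f v (alM m))).
Proof. by rewrite /yau_twist alM_betaM -betaM_f. Qed.

Lemma yau_twist_twist g x y m :
  yau_twist f (al (al x)) (yau_twist g y m) = betaM (betaM (f (al (al x)) (g (al y) m))).
Proof. by rewrite /yau_twist -betaM_f. Qed.

Lemma yau_twist_alM_comp :
  (forall x m, alM (f x m) = f (al x) (alM m)) ->
  forall x m, alM (betaM (yau_twist f x m)) = yau_twist f (al (al x)) (alM (betaM m)).
Proof. by move=> alM_f x m; rewrite yau_twist_alM_betaM -alM_f !alM_betaM. Qed.

End Equivariant.

Variables (br dot : L -> L -> L) (dia bul : L -> M -> M).
Hypotheses (betaM_dia : forall x m, betaM (dia x m) = dia (al x) (betaM m))
           (betaM_bul : forall x m, betaM (bul x m) = bul (al x) (betaM m)).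

Lemma yau_twist_module :
  is_multiplicative br dot al ->
  is_HomPostLie_module br dot al dia bul alM ->
  is_HomPostLie_module (fun x y => al (br x y)) (fun x y => al (dot x y)) (al \o al)%FUN
    (yau_twist dia) (yau_twist bul) (alM \o betaM)%FUN.
Proof.
move=> [al_br al_dot] [dia_bil bul_bil alM_dia alM_bul dia_br dia_dot bul_br].
split=> [||x m|x m|x y m|x y m|x y m] /=.
- exact: bilinear_yau_twist.
- exact: bilinear_yau_twist.
- exact: yau_twist_alM_comp.
- exact: yau_twist_alM_comp.
- by rewrite !yau_twist_alM_betaM // al_br dia_br !linearB /= !yau_twist_twist.
- by rewrite !yau_twist_alM_betaM // al_dot dia_dot !linearB /= !yau_twist_twist.
- rewrite !yau_twist_alM_betaM // !al_br !al_dot bul_br !linearD !linearN /=.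
  by rewrite !yau_twist_twist.
Qed.

End YauTwist.

Theorem mainTheorem9 (K : fieldType) (hK : (2%:R : K) != 0)
  (L M : lmodType K) (br dot : L -> L -> L) (al : {linear L -> L})
  (dia bul : L -> M -> M) (alM betaM : {linear M -> M}) :
  is_HomPostLie br dot al ->
  is_multiplicative br dot al ->
  is_HomPostLie_module br dot al dia bul alM ->
  (forall m, alM (betaM m) = betaM (alM m)) ->
  (forall x m, betaM (dia x m) = dia (al x) (betaM m)) ->
  (forall x m, betaM (bul x m) = bul (al x) (betaM m)) ->
  is_HomPostLie_module (fun x y => al (br x y)) (fun x y => al (dot x y))
    (al \o al)%FUN
    (fun x m => betaM (dia (al x) m)) (fun x m => betaM (bul (al x) m))
    (alM \o betaM)%FUN.
Proof.
move=> _ mult modM alM_betaM betaM_dia betaM_bul.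
exact: yau_twist_module.
Qed.
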